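(* Let $\mathrm{R}_8=\{a_0,a_1,\dots,a_7\}$ be the dihedral quandle of order $8$, i.e. the set $\mathbb{Z}_8$ with the binary operation $a_i\cdot a_j=a_{(2j-i)\bmod 8}$. Let $\mathbb{Z}[\mathrm{R}_8]$ be its integral quandle ring and $\Delta(\mathrm{R}_8)$ its augmentation ideal. Then \[ \left|\Delta^2(\mathrm{R}_8)/\Delta^3(\mathrm{R}_8)\right| = 16 . \]
   Context: For a quandle $A$, the quandle ring $\mathbb{Z}[A]$ is the free abelian group on $A$, with multiplication defined by bilinear extension of the quandle operation: $\left(\sum_i r_i a_i\right)\cdot\left(\sum_j s_j a_j\right)=\sum_{i,j} r_i s_j (a_i\cdot a_j)$ (this ring is in general non-associative). The augmentation ideal $\Delta(A)$ is the kernel of the augmentation map $\varepsilon:\mathbb{Z}[A]\to\mathbb{Z}$, $\sum_i r_i a_i\mapsto \sum_i r_i$. Its powers are defined by $\Delta^1(A)=\Delta(A)$ and $\Delta^{k+1}(A)=\Delta^k(A)\cdot\Delta(A)$, the additive subgroup of $\mathbb{Z}[A]$ generated by all products $x\cdot y$ with $x\in\Delta^k(A)$, $y\in\Delta(A)$. *)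

From mathcomp Require Import all_boot all_order all_algebra.
Set Implicit Arguments. Unset Strict Implicit. Unset Printing Implicit Defensive.
Import GRing.Theory.
Local Open Scope ring_scope.

(* The integral quandle ring Z[A] of a finite quandle A with carrier 'I_n:
   the free abelian group on 'I_n, i.e. integer-valued functions on 'I_n
   (element sum_i r_i a_i  <->  the function i |-> r_i). *)
Definition qring (n : nat) := {ffun 'I_n -> int}.

Definition qmul (n : nat) (op : 'I_n -> 'I_n -> 'I_n) (x y : qring n) : qring n :=
  [ffun k => \sum_(i < n) \sum_(j < n) (if op i j == k then x i * y j else 0)].

Definition augm (n : nat) (x : qring n) : int := \sum_(i < n) x i.

Definition aug_ideal (n : nat) (x : qring n) : Prop := augm x = 0.

Inductive zspan (n : nat) (S : qring n -> Prop) : qring n -> Prop :=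
  | zspan0 : zspan S 0
  | zspan_gen x : S x -> zspan S x
  | zspanN x : zspan S x -> zspan S (- x)
  | zspanD x y : zspan S x -> zspan S y -> zspan S (x + y).

Fixpoint aug_pow (n : nat) (op : 'I_n -> 'I_n -> 'I_n) (k : nat) : qring n -> Prop :=
  match k with
  | 0 => fun _ => True
  | 1 => @aug_ideal n
  | k'.+1 => zspan (fun z => exists x y,
               aug_pow op k' x /\ aug_ideal y /\ z = qmul op x y)
  end.

Definition quot_card (n : nat) (H K : qring n -> Prop) (m : nat) : Prop :=
  exists f : 'I_m -> qring n,
    [/\ forall i, H (f i),
        forall i j, K (f i - f j) -> i = j
      & forall x, H x -> exists i, K (x - f i)].

Definition dihedral_op (n : nat) (i j : 'I_n.+1) : 'I_n.+1 :=
  inord ((2 * j + (n.+1 - i)) %% n.+1)%N.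

(* Write x_0, ..., x_7 for the coordinates of x in Z[R_8], so that (xy)_k is
   the sum of x_(2j-k) y_j over j (indices mod 8).  Expanding this bilinear
   formula shows that Delta^2 lies in the lattice L2 given by augmentation
   zero, x_0 + x_2 + x_4 + x_6 = 0 and one congruence modulo 4, and that
   Delta^3 lies in the lattice L3 given by the same two equations and
   congruences modulo 2, 4 and 8.  Conversely six triple products of the
   generators a_i - a_0 of Delta form a Z-basis of L3, so Delta^3 = L3.
   Modulo L3, every element of L2 is congruent to exactly one combination
   p (a_1 - a_0)^2 + q (a_3 - a_0)(a_1 - a_0) with 0 <= p, q < 4, and these
   sixteen elements lie in Delta^2. *)

From mathcomp Require Import all_boot all_order all_algebra zify ring.

Set Implicit Arguments. Unset Strict Implicit. Unset Printing Implicit Defensive.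
Import GRing.Theory.
Local Open Scope ring_scope.

Section AugmentationPowers.
Variables (n : nat) (op : 'I_n -> 'I_n -> 'I_n).

Lemma zspanMz (S : qring n -> Prop) x z : zspan S x -> zspan S (x *~ z).
Proof.
move=> Sx; have SxMn k : zspan S (x *+ k).
  by elim: k => [|k IHk]; [rewrite mulr0n; apply: zspan0 | rewrite mulrS; apply: zspanD].
by case: z => k; rewrite ?NegzE ?mulrNz; [apply: SxMn | apply: zspanN; apply: SxMn].
Qed.

Lemma aug_pow_qmul k x y :
  aug_pow op k.+1 x -> aug_ideal y -> aug_pow op k.+2 (qmul op x y).
Proof. by move=> Ax Ay; apply: zspan_gen; exists x, y. Qed.

Definition aug_basis (i : nat) : qring n :=
  [ffun k : 'I_n => (k == i :> nat)%:Z - (k == 0 :> nat)%:Z].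

Lemma sum_indicator (i : nat) : (i < n)%N -> \sum_(k < n) (k == i :> nat)%:Z = 1.
Proof.
move=> ltin; rewrite (bigD1 (Ordinal ltin)) //= eqxx big1 ?addr0 // => k.
by rewrite -val_eqE /= => /negbTE ->.
Qed.

Lemma aug_basis_aug (i : nat) : (0 < n)%N -> (i < n)%N -> aug_ideal (aug_basis i).
Proof.
move=> n_gt0 ltin; rewrite /aug_ideal /augm.
under eq_bigr do rewrite ffunE.
by rewrite sumrB !sum_indicator ?subrr.
Qed.

End AugmentationPowers.

Local Notation R8 := (@dihedral_op 7).
Local Notation e := (@aug_basis 8).

Definition qcoord (x : qring 8) (i : nat) : int := x (inord i).

Definition qring8 (s : seq int) : qring 8 := [ffun i : 'I_8 => nth 0 s i].

Lemma qcoord_qring8 s i : (i < 8)%N -> qcoord (qring8 s) i = nth 0 s i.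
Proof. by move=> lti8; rewrite /qcoord ffunE inordK. Qed.

Lemma qcoord_aug_basis i k :
  (k < 8)%N -> qcoord (e i) k = (k == i)%:Z - (k == 0%N)%:Z.
Proof. by move=> ltk8; rewrite /qcoord ffunE inordK. Qed.

Lemma qcoord0 i : qcoord 0 i = 0. Proof. by rewrite /qcoord ffunE. Qed.
Lemma qcoordD x y i : qcoord (x + y) i = qcoord x i + qcoord y i.
Proof. by rewrite /qcoord ffunE. Qed.
Lemma qcoordN x i : qcoord (- x) i = - qcoord x i.
Proof. by rewrite /qcoord ffunE. Qed.
Lemma qcoordB x y i : qcoord (x - y) i = qcoord x i - qcoord y i.
Proof. by rewrite qcoordD qcoordN. Qed.
Lemma qcoordMz x z i : qcoord (x *~ z) i = qcoord x i * z.
Proof. by rewrite /qcoord ffunMzE mulrzz. Qed.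

Lemma qring8_eq x y :
  qcoord x 0 = qcoord y 0 -> qcoord x 1 = qcoord y 1 -> qcoord x 2 = qcoord y 2 ->
  qcoord x 3 = qcoord y 3 -> qcoord x 4 = qcoord y 4 -> qcoord x 5 = qcoord y 5 ->
  qcoord x 6 = qcoord y 6 -> qcoord x 7 = qcoord y 7 -> x = y.
Proof.
move=> ? ? ? ? ? ? ? ?; apply/ffunP => k; rewrite -[k]inord_val.
by case: k => -[|[|[|[|[|[|[|[|//]]]]]]]].
Qed.

Lemma dihedral_op8_eq (i j k : 'I_8) :
  (R8 i j == k) = (i == inord ((2 * j + 8 - k) %% 8)).
Proof.
by rewrite -!val_eqE /= !inordK; move: (ltn_ord i) (ltn_ord j) (ltn_ord k); lia.
Qed.

Lemma qcoord_qmul x y (k : nat) : (k < 8)%N ->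
  qcoord (qmul R8 x y) k =
    \sum_(0 <= j < 8) qcoord x ((2 * j + 8 - k) %% 8) * qcoord y j.
Proof.
move=> ltk8; rewrite /qcoord ffunE exchange_big big_mkord; apply: eq_bigr => j _.
rewrite inord_val (bigD1 (inord ((2 * j + 8 - k) %% 8))) //= dihedral_op8_eq inordK // eqxx.
by rewrite big1 ?addr0 // => i /negbTE neq_i; rewrite dihedral_op8_eq inordK // neq_i.
Qed.

Lemma qcoord_qmul0 x y : qcoord (qmul R8 x y) 0 =
  qcoord x 0 * qcoord y 0 + qcoord x 2 * qcoord y 1 + qcoord x 4 * qcoord y 2 +
  qcoord x 6 * qcoord y 3 + qcoord x 0 * qcoord y 4 + qcoord x 2 * qcoord y 5 +
  qcoord x 4 * qcoord y 6 + qcoord x 6 * qcoord y 7.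
Proof. by rewrite qcoord_qmul // !big_nat_recl // big_geq //; ring. Qed.
Lemma qcoord_qmul1 x y : qcoord (qmul R8 x y) 1 =
  qcoord x 7 * qcoord y 0 + qcoord x 1 * qcoord y 1 + qcoord x 3 * qcoord y 2 +
  qcoord x 5 * qcoord y 3 + qcoord x 7 * qcoord y 4 + qcoord x 1 * qcoord y 5 +
  qcoord x 3 * qcoord y 6 + qcoord x 5 * qcoord y 7.
Proof. by rewrite qcoord_qmul // !big_nat_recl // big_geq //; ring. Qed.
Lemma qcoord_qmul2 x y : qcoord (qmul R8 x y) 2 =
  qcoord x 6 * qcoord y 0 + qcoord x 0 * qcoord y 1 + qcoord x 2 * qcoord y 2 +
  qcoord x 4 * qcoord y 3 + qcoord x 6 * qcoord y 4 + qcoord x 0 * qcoord y 5 +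
  qcoord x 2 * qcoord y 6 + qcoord x 4 * qcoord y 7.
Proof. by rewrite qcoord_qmul // !big_nat_recl // big_geq //; ring. Qed.
Lemma qcoord_qmul3 x y : qcoord (qmul R8 x y) 3 =
  qcoord x 5 * qcoord y 0 + qcoord x 7 * qcoord y 1 + qcoord x 1 * qcoord y 2 +
  qcoord x 3 * qcoord y 3 + qcoord x 5 * qcoord y 4 + qcoord x 7 * qcoord y 5 +
  qcoord x 1 * qcoord y 6 + qcoord x 3 * qcoord y 7.
Proof. by rewrite qcoord_qmul // !big_nat_recl // big_geq //; ring. Qed.
Lemma qcoord_qmul4 x y : qcoord (qmul R8 x y) 4 =
  qcoord x 4 * qcoord y 0 + qcoord x 6 * qcoord y 1 + qcoord x 0 * qcoord y 2 +
  qcoord x 2 * qcoord y 3 + qcoord x 4 * qcoord y 4 + qcoord x 6 * qcoord y 5 +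
  qcoord x 0 * qcoord y 6 + qcoord x 2 * qcoord y 7.
Proof. by rewrite qcoord_qmul // !big_nat_recl // big_geq //; ring. Qed.
Lemma qcoord_qmul5 x y : qcoord (qmul R8 x y) 5 =
  qcoord x 3 * qcoord y 0 + qcoord x 5 * qcoord y 1 + qcoord x 7 * qcoord y 2 +
  qcoord x 1 * qcoord y 3 + qcoord x 3 * qcoord y 4 + qcoord x 5 * qcoord y 5 +
  qcoord x 7 * qcoord y 6 + qcoord x 1 * qcoord y 7.
Proof. by rewrite qcoord_qmul // !big_nat_recl // big_geq //; ring. Qed.
Lemma qcoord_qmul6 x y : qcoord (qmul R8 x y) 6 =
  qcoord x 2 * qcoord y 0 + qcoord x 4 * qcoord y 1 + qcoord x 6 * qcoord y 2 +
  qcoord x 0 * qcoord y 3 + qcoord x 2 * qcoord y 4 + qcoord x 4 * qcoord y 5 +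
  qcoord x 6 * qcoord y 6 + qcoord x 0 * qcoord y 7.
Proof. by rewrite qcoord_qmul // !big_nat_recl // big_geq //; ring. Qed.
Lemma qcoord_qmul7 x y : qcoord (qmul R8 x y) 7 =
  qcoord x 1 * qcoord y 0 + qcoord x 3 * qcoord y 1 + qcoord x 5 * qcoord y 2 +
  qcoord x 7 * qcoord y 3 + qcoord x 1 * qcoord y 4 + qcoord x 3 * qcoord y 5 +
  qcoord x 5 * qcoord y 6 + qcoord x 7 * qcoord y 7.
Proof. by rewrite qcoord_qmul // !big_nat_recl // big_geq //; ring. Qed.

Definition qcoord_qmulE := (qcoord_qmul0, qcoord_qmul1, qcoord_qmul2, qcoord_qmul3,
  qcoord_qmul4, qcoord_qmul5, qcoord_qmul6, qcoord_qmul7).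

Lemma augm8 x : augm x = qcoord x 0 + qcoord x 1 + qcoord x 2 + qcoord x 3 +
  qcoord x 4 + qcoord x 5 + qcoord x 6 + qcoord x 7.
Proof.
rewrite /augm (eq_bigr (fun i : 'I_8 => qcoord x i)) => [|i _]; last first.
  by rewrite /qcoord inord_val.
by rewrite -(big_mkord xpredT (qcoord x)) !big_nat_recl // big_geq //; ring.
Qed.

Definition in_L2 (x : qring 8) : bool :=
  [&& augm x == 0, qcoord x 0 + qcoord x 2 + qcoord x 4 + qcoord x 6 == 0 &
      (4 %| qcoord x 5 - qcoord x 0 - qcoord x 1 - 2 * qcoord x 2 - 2 * qcoord x 3
            - 3 * qcoord x 4)%Z].

Definition in_L3 (x : qring 8) : bool :=
  [&& augm x == 0, qcoord x 0 + qcoord x 2 + qcoord x 4 + qcoord x 6 == 0,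
      (2 %| qcoord x 3 - qcoord x 0 - qcoord x 1 - qcoord x 2)%Z,
      (4 %| qcoord x 4 - qcoord x 0 - 2 * qcoord x 2)%Z &
      (8 %| qcoord x 5 - qcoord x 0 - 3 * qcoord x 1 - 4 * qcoord x 2 - qcoord x 4)%Z].

Lemma qmul_aug_L2 u v : aug_ideal u -> aug_ideal v -> in_L2 (qmul R8 u v).
Proof.
rewrite /aug_ideal /in_L2 !augm8 !qcoord_qmulE.
move: (qcoord u 0) (qcoord u 1) (qcoord u 2) (qcoord u 3) (qcoord u 4) (qcoord u 5)
  (qcoord u 6) (qcoord u 7) (qcoord v 0) (qcoord v 1) (qcoord v 2) (qcoord v 3)
  (qcoord v 4) (qcoord v 5) (qcoord v 6) (qcoord v 7)
  => u0 u1 u2 u3 u4 u5 u6 u7 v0 v1 v2 v3 v4 v5 v6 v7 augu augv.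
have -> : u0 = - (u1 + u2 + u3 + u4 + u5 + u6 + u7) by lia.
have -> : v0 = - (v1 + v2 + v3 + v4 + v5 + v6 + v7) by lia.
apply/and3P; split; [apply/eqP; ring | apply/eqP; ring | apply/dvdzP].
exists ((u4 + u5) * (v1 + v2 + v5 + v6) + (u6 + u7) * (v2 + v6) - (u2 + u3) * (v3 + v7)).
ring.
Qed.

Lemma qmul_L2_aug_L3 x y : in_L2 x -> aug_ideal y -> in_L3 (qmul R8 x y).
Proof.
rewrite /aug_ideal /in_L2 /in_L3 !augm8 !qcoord_qmulE.
move: (qcoord x 0) (qcoord x 1) (qcoord x 2) (qcoord x 3) (qcoord x 4) (qcoord x 5)
  (qcoord x 6) (qcoord x 7) (qcoord y 0) (qcoord y 1) (qcoord y 2) (qcoord y 3)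
  (qcoord y 4) (qcoord y 5) (qcoord y 6) (qcoord y 7)
  => x0 x1 x2 x3 x4 x5 x6 x7 y0 y1 y2 y3 y4 y5 y6 y7.
case/and3P => /eqP augx /eqP evenx /dvdzP[q x5E] augy.
have -> : x7 = - (x0 + x1 + x2 + x3 + x4 + x5 + x6) by lia.
have -> : x6 = - (x0 + x2 + x4) by lia.
have -> : x5 = x0 + x1 + 2 * x2 + 2 * x3 + 3 * x4 + q * 4 by lia.
have -> : y0 = - (y1 + y2 + y3 + y4 + y5 + y6 + y7) by lia.
apply/and5P; split; [apply/eqP; ring | apply/eqP; ring | apply/dvdzP | apply/dvdzP | apply/dvdzP].
(* a_i . a_j depends on j only modulo 4, so y enters only through y_j + y_(j+4). *)
- exists (- (6 * q + 2 * x0 + 3 * x1 + 4 * x2 + 4 * x3 + 5 * x4) * (y1 + y5)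
          - (4 * q + x0 + x1 + 3 * x2 + 3 * x3 + 4 * x4) * (y2 + y6)
          - (6 * q + x0 + 2 * x1 + 3 * x2 + 3 * x3 + 5 * x4) * (y3 + y7)).
  ring.
- exists (- (x0 + x2 + x4) * (y1 + y5) - (x2 + x4) * (y2 + y6) - x4 * (y3 + y7)).
  ring.
- exists (- (q + x0 + x1 + x2 + x3 + x4) * (y1 + y5)
          - (2 * q + x0 + x1 + 2 * x2 + 2 * x3 + 2 * x4) * (y2 + y6)
          - (3 * q + x0 + x1 + 2 * x2 + 2 * x3 + 3 * x4) * (y3 + y7)).
  ring.
Qed.

Lemma Delta2_sub_L2 x : aug_pow R8 2 x -> in_L2 x.
Proof.
elim=> [|_ [u [v [augu [augv ->]]]]|y _ Ly|y z _ Ly _ Lz].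
- by rewrite /in_L2 augm8 !qcoord0.
- exact: qmul_aug_L2.
- by move: Ly; rewrite /in_L2 !augm8 !qcoordN; lia.
- by move: Ly Lz; rewrite /in_L2 !augm8 !qcoordD; lia.
Qed.

Lemma Delta3_sub_L3 x : aug_pow R8 3 x -> in_L3 x.
Proof.
elim=> [|_ [u [v [Du [augv ->]]]]|y _ Ly|y z _ Ly _ Lz].
- by rewrite /in_L3 augm8 !qcoord0.
- exact: qmul_L2_aug_L3 (Delta2_sub_L2 Du) augv.
- by move: Ly; rewrite /in_L3 !augm8 !qcoordN; lia.
- by move: Ly Lz; rewrite /in_L3 !augm8 !qcoordD; lia.
Qed.

Definition triple (i j k : nat) : qring 8 := qmul R8 (qmul R8 (e i) (e j)) (e k).

Lemma triple_Delta3 i j k :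
  (i < 8)%N -> (j < 8)%N -> (k < 8)%N -> aug_pow R8 3 (triple i j k).
Proof.
move=> lti8 ltj8 ltk8; apply: aug_pow_qmul; [apply: aug_pow_qmul|]; exact: aug_basis_aug.
Qed.

Ltac qring8_eval := apply: qring8_eq; rewrite ?qcoord_qmulE ?qcoord_aug_basis ?qcoord_qring8.

Lemma triple112E : triple 1 1 2 = qring8 [:: -1; 1; -1; 1; 1; -1; 1; -1].
Proof. by qring8_eval. Qed.
Lemma triple113E : triple 1 1 3 = qring8 [:: -1; 1; 0; 0; -1; 1; 2; -2].
Proof. by qring8_eval. Qed.
Lemma triple121E : triple 1 2 1 = qring8 [:: -1; 1; 1; -1; 1; -1; -1; 1].
Proof. by qring8_eval. Qed.
Lemma triple222E : triple 2 2 2 = qring8 [:: -2; 0; 2; 0; 2; 0; -2; 0].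
Proof. by qring8_eval. Qed.
Lemma triple231E : triple 2 3 1 = qring8 [:: -1; 0; 3; 0; -3; 0; 1; 0].
Proof. by qring8_eval. Qed.
Lemma triple712E : triple 7 1 2 = qring8 [:: -1; 1; -1; -1; 1; -1; 1; 1].
Proof. by qring8_eval. Qed.

Lemma L3_sub_Delta3 x : in_L3 x -> aug_pow R8 3 x.
Proof.
rewrite /in_L3 augm8.
case/and5P => /eqP augx /eqP evenx /dvdzP[k1 k1E] /dvdzP[k2 k2E] /dvdzP[k3 k3E].
(* The coefficients are the coordinates of x in the basis of L3 formed by the six triples. *)
have -> : x =
    triple 1 1 2 *~ (k1 - qcoord x 2 - k2 - 2 * k3)
  + triple 1 1 3 *~ (qcoord x 0 + 2 * qcoord x 1 + 3 * qcoord x 2 + 2 * k2 + 4 * k3)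
  + triple 1 2 1 *~ (qcoord x 0 + qcoord x 1 + qcoord x 2 + k2)
  + triple 2 2 2 *~ (qcoord x 2 + k2 + k3)
  + triple 2 3 1 *~ (- qcoord x 0 - qcoord x 1 - 2 * qcoord x 2 - 2 * k2 - 2 * k3)
  + triple 7 1 2 *~ (- 2 * qcoord x 0 - 2 * qcoord x 1 - 3 * qcoord x 2 - k1 - 2 * k2 - 2 * k3).
  apply: qring8_eq; rewrite !qcoordD !qcoordMz triple112E triple113E triple121E
    triple222E triple231E triple712E !qcoord_qring8 //=; lia.
by repeat apply: zspanD; apply: zspanMz; apply: triple_Delta3.
Qed.

Definition coset_rep (p q : int) : qring 8 :=
  qmul R8 (e 1) (e 1) *~ p + qmul R8 (e 3) (e 1) *~ q.

Lemma coset_rep_Delta2 p q : aug_pow R8 2 (coset_rep p q).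
Proof.
by apply: zspanD; apply: zspanMz; apply: (aug_pow_qmul (k := 0)); apply: aug_basis_aug.
Qed.

Lemma coset_repE p q :
  coset_rep p q = qring8 [:: p + q; p; - p - q; 0; 0; - q; 0; - p + q].
Proof.
qring8_eval => //; rewrite !qcoordD !qcoordMz !qcoord_qmulE !qcoord_aug_basis //=; ring.
Qed.

Lemma coset_rep_L3_inj (p q p' q' : nat) :
  (p < 4)%N -> (q < 4)%N -> (p' < 4)%N -> (q' < 4)%N ->
  in_L3 (coset_rep p q - coset_rep p' q') -> p = p' /\ q = q'.
Proof.
rewrite /in_L3 augm8 !qcoordB !coset_repE !qcoord_qring8 //=; lia.
Qed.

Lemma divz_eq_nat (a : int) (d : nat) : (0 < d)%N ->
  exists (r : nat) (s : int), (r < d)%N /\ a = s * d%:Z + r%:Z.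
Proof.
move=> d_gt0; have d_neq0 : d%:Z != 0 by rewrite eqz_nat -lt0n.
exists (absz (a %% d)%Z), (a %/ d)%Z; rewrite gez0_abs ?modz_ge0 // -divz_eq.
by split=> //; rewrite -ltz_nat gez0_abs ?modz_ge0 // ltz_pmod.
Qed.

Lemma L2_coset_rep x : in_L2 x ->
  exists p q : nat, [/\ (p < 4)%N, (q < 4)%N & in_L3 (x - coset_rep p q)].
Proof.
rewrite /in_L2 /in_L3 !augm8; case/and3P => /eqP augx /eqP evenx /dvdzP[k Ek].
have [q [s [ltq4 Es]]] :=
  divz_eq_nat (2 * k - qcoord x 1 - qcoord x 2 + qcoord x 3 + qcoord x 4) (isT : 0 < 4)%N.
have [p [t [ltp4 Et]]] :=
  divz_eq_nat (qcoord x 4 - qcoord x 0 - 2 * qcoord x 2 - q%:Z) (isT : 0 < 4)%N.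
exists p, q; split=> //.
by rewrite augm8 !qcoordB !coset_repE !qcoord_qring8 //=; lia.
Qed.

Theorem theorem2p1 :
  quot_card (aug_pow (@dihedral_op 7) 2) (aug_pow (@dihedral_op 7) 3) 16.
Proof.
exists (fun i : 'I_16 => coset_rep (i %/ 4)%N (i %% 4)%N); split.
- by move=> i; apply: coset_rep_Delta2.
- move=> i j /Delta3_sub_L3 /coset_rep_L3_inj inj_ij; apply: ord_inj.
  by move: inj_ij (ltn_ord i) (ltn_ord j); lia.
- move=> x /Delta2_sub_L2 /L2_coset_rep[p [q [ltp4 ltq4 /L3_sub_Delta3 Dx]]].
  have lti16 : (p * 4 + q < 16)%N by lia.
  by exists (Ordinal lti16); rewrite /= divnMDl // divn_small // addn0 modnMDl modn_small.
Qed.
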